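(* Let $1\le D\le K-1$, let $\mathbf{L}$ be the $(K,D)$ AIR matrix, and let $x_0,\dots,x_{K-1}\in\mathbb{F}_q$. Define the broadcast symbols $c_k=\sum_{j=0}^{K-1}\mathbf{L}(j,k)\,x_j$ for $k\in[0:K-D-1]$. Then for every $k\in[0:K-D-1]$, $$c_k = x_k+\sum_{i=0}^{\lfloor l/2\rfloor} I_{\{k\in C_i\}}\; x_{(K-\lambda_{2i})+\big((k-(K-D-\lambda_{2i-1}))\bmod \lambda_{2i}\big)} \;+\;\sum_{i=1}^{\lceil l/2\rceil} I_{\{k\in C_i\cup C_{i+1}\cup\cdots\cup C_{\lceil l/2\rceil}\}}\sum_{j=1}^{\beta_{2i-1}} x_{\,k+\sum_{s=1}^{i-1}\beta_{2s-1}\lambda_{2s-1}+j\lambda_{2i-1}},$$ where $I_S$ equals $1$ if the statement $S$ is true and $0$ otherwise. (In particular the $i=0$ term of the first sum is $I_{\{k\in C_0\}}x_{(K-D)+(k\bmod \lambda_0)}$.)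
   Context: Notation: $[a:b]=\{a,a+1,\dots,b\}$ (empty if $b<a$). Let $K,D$ be integers with $1\le D\le K-1$. Define $\lambda_{-1}=K-D$, $\lambda_0=D$ and recursively, by Euclidean division, $\lambda_{i-1}=\beta_i\lambda_i+\lambda_{i+1}$ with $0\le\lambda_{i+1}<\lambda_i$, for $i=0,1,2,\dots$, stopping at the index $l\ge 0$ with $\lambda_{l+1}=0$ (so $\lambda_{l-1}=\beta_l\lambda_l$); $\beta_0\ge 0$ may be $0$, while $\beta_i\ge1$ for $i\ge1$. Set $\lambda_j=0$ for all $j>l$. For positive integers $m,n$ with $n\mid m$, let $\mathbf{I}_{m\times n}$ be the $m\times n$ matrix formed by stacking $m/n$ copies of the $n\times n$ identity matrix vertically, and $\mathbf{I}_{n\times m}$ its transpose ($m/n$ identity copies side by side). The $(K,D)$ AIR matrix $\mathbf{L}$ is the $K\times(K-D)$ $0/1$ matrix with rows indexed by $[0:K-1]$ and columns by $[0:K-D-1]$ whose entries are $0$ except in the following non-overlapping blocks: (a) the $(K-D)\times(K-D)$ identity matrix in rows $[0:K-D-1]$, columns $[0:K-D-1]$; (b) for each $i$ with $0\le 2i\le l$, the ''even submatrix'' $\mathbf{I}_{\lambda_{2i}\times\beta_{2i}\lambda_{2i}}$ occupying rows $[K-\lambda_{2i}:K-1]$ and columns $[K-D-\lambda_{2i-1}:K-D-\lambda_{2i+1}-1]$ (absent when $i=0$ and $\beta_0=0$); (c) for each $i$ with $1\le 2i+1\le l$, the ''odd submatrix'' $\mathbf{I}_{\beta_{2i+1}\lambda_{2i+1}\times\lambda_{2i+1}}$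 occupying rows $[K-\lambda_{2i}:K-\lambda_{2i+2}-1]$ and columns $[K-D-\lambda_{2i+1}:K-D-1]$. Column intervals: $C_i=[K-D-\lambda_{2i-1}:K-D-\lambda_{2i+1}-1]$ for $0\le i\le\lceil l/2\rceil$ (so $C_0=[0:\beta_0\lambda_0-1]$, empty if $\beta_0=0$); these partition $[0:K-D-1]$. *)

From HB Require Import structures.
From mathcomp Require Import all_boot all_order all_algebra.
Set Implicit Arguments. Unset Strict Implicit. Unset Printing Implicit Defensive.
Import GRing.Theory.
Local Open Scope nat_scope.

(* Euclidean remainder sequence: lampair n = (lambda_{n-1}, lambda_n). *)
Fixpoint lampair (K D n : nat) : nat * nat :=
  match n with
  | 0 => (K - D, D)
  | n'.+1 => let p := lampair K D n' in
             (p.2, if p.2 == 0 then 0 else p.1 %% p.2)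
  end.

(* lamP K D i = lambda_{i-1}  (so lamP K D 0 = K - D) *)
Definition lamP (K D i : nat) : nat := (lampair K D i).1.
(* lam K D i = lambda_i  (lambda_j = 0 for j > l) *)
Definition lam (K D i : nat) : nat := (lampair K D i).2.

Definition ell (K D : nat) : nat := find (fun i => lam K D i.+1 == 0) (iota 0 K).

Definition beta (K D i : nat) : nat := lamP K D i %/ lam K D i.

Definition inR (a b n : nat) : bool := (a <= n) && (n < b).

(* k \in C_i = [K-D-lambda_{2i-1} : K-D-lambda_{2i+1}-1] *)
Definition inC (K D i k : nat) : bool :=
  inR (K - D - lamP K D (2 * i)) (K - D - lam K D (2 * i).+1) k.

Definition airL (K D j k : nat) : bool :=
  [|| (j < K - D) && (k < K - D) && (j == k),
      (* even submatrices I_{lambda_{2i} x beta_{2i} lambda_{2i}} *)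
      [exists i : 'I_(ell K D).+1,
        [&& 2 * i <= ell K D,
            inR (K - lam K D (2 * i)) K j,
            inC K D i k &
            (k - (K - D - lamP K D (2 * i))) %% lam K D (2 * i)
              == j - (K - lam K D (2 * i))]]
    | (* odd submatrices I_{beta_{2i+1} lambda_{2i+1} x lambda_{2i+1}} *)
      [exists i : 'I_(ell K D).+1,
        [&& 1 <= (2 * i).+1 <= ell K D,
            inR (K - lam K D (2 * i)) (K - lam K D (2 * i).+2) j,
            inR (K - D - lam K D (2 * i).+1) (K - D) k &
            (j - (K - lam K D (2 * i))) %% lam K D (2 * i).+1
              == k - (K - D - lam K D (2 * i).+1)]]].

Definition airMx (R : pzSemiRingType) (K D : nat) : 'M[R]_(K, K - D) :=
  \matrix_(j < K, k < K - D) ((airL K D j k : nat)%:R)%R.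

From HB Require Import structures.
From mathcomp Require Import all_boot all_order all_algebra.
From mathcomp Require Import zify.
Import GRing.Theory.

(* The blocks of L never overlap: distinct even submatrices live in the disjoint
   column intervals C_i, distinct odd submatrices in disjoint row intervals, and an
   even and an odd submatrix are separated either by columns or by rows.  Hence
   L(j,k) is the sum of the indicators of the identity block and of all the
   submatrices, and c_k splits into one sum per block.  The even submatrix i meets
   column k in C_i in exactly one row, given by the residue of k modulo lambda_2i.
   The odd submatrix i meets column k >= K-D-lambda_(2i+1) in beta_(2i+1) rows in
   arithmetic progression of step lambda_(2i+1), starting at
   k + (D - lambda_2i) + lambda_(2i+1); the Euclidean recursion telescopes to
   D - lambda_2i = sum_(s<=i) beta_(2s-1) lambda_(2s-1).  Finally, as the C_i
   partition [0 : K-D-1], k >= K-D-lambda_(2i-1) exactly when k lies in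
   C_i u ... u C_(ceil(l/2)). *)

Section IndicatorSums.
Variables (R : pzSemiRingType) (n : nat) (x : nat -> R).
Local Open Scope ring_scope.

Lemma sum_indicator1 (P : pred 'I_n) t :
  (t < n)%N -> (forall j : 'I_n, P j = (j == t :> nat)) ->
  \sum_(j < n) (P j : nat)%:R * x j = x t.
Proof.
move=> lt_tn Pt; rewrite (bigD1 (Ordinal lt_tn)) ?Pt //= eqxx mul1r.
rewrite big1 ?addr0 // => j /eqP ne_jt.
by rewrite Pt (_ : _ == t = false) ?mul0r //; apply/eqP => eq_jt; apply/ne_jt/val_inj.
Qed.

Lemma sum_indicator0 (P : pred 'I_n) :
  (forall j : 'I_n, P j = false) -> \sum_(j < n) (P j : nat)%:R * x j = 0.
Proof. by move=> P0; rewrite big1 // => j _; rewrite P0 mul0r. Qed.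

Lemma sum_indicator_progression a b mu r : (r < mu)%N -> (a + b * mu <= n)%N ->
  \sum_(j < n) ([&& a <= j, j < a + b * mu & (j - a) %% mu == r]%N : nat)%:R * x j
  = \sum_(0 <= s < b) x (a + r + s * mu)%N.
Proof.
move=> lt_r_mu; elim: b => [|b IHb] le_n.
  by rewrite big_geq // sum_indicator0 // => j; apply/negbTE; lia.
have lt_last : (a + r + b * mu < n)%N by lia.
rewrite big_nat_recr //= -IHb; last by lia.
rewrite -(@sum_indicator1 (fun j : 'I_n => j == a + r + b * mu :> nat) _ lt_last) //.
rewrite -big_split /=.
apply: eq_bigr => j _; rewrite -mulrDl -natrD; congr (_%:R * _).
have [lt_j|le_j] := ltnP j (a + b * mu).
  rewrite (_ : (j < a + b.+1 * mu)%N) ?addn0; last by lia.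
  by rewrite (_ : (nat_of_ord j == _) = false) ?addn0 //; lia.
rewrite andFb andbF add0n.
have -> : ((j - a) %% mu = (j - a - b * mu) %% mu)%N.
  by rewrite -[in LHS](subnK (_ : b * mu <= j - a)%N) 1?addnC ?modnMDl //; lia.
have [lt_j'|le_j'] := ltnP j (a + b.+1 * mu).
  by rewrite modn_small; [case: eqP; case: eqP => //; lia | lia].
by rewrite andbF (_ : _ == _ = false) //; lia.
Qed.

Lemma sum_indicator_prefix m (b : nat -> bool) (G : nat -> R) : (m <= n)%N ->
  \sum_(i < n) ((i < m)%N && b i : nat)%:R * G i = \sum_(0 <= i < m) (b i : nat)%:R * G i.
Proof.
move=> le_mn; rewrite -(big_mkord xpredT (fun i => ((i < m)%N && b i : nat)%:R * G i)).
rewrite (@big_cat_nat _ _ _ m) //=.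
rewrite [X in _ + X]big_nat_cond [X in _ + X]big1 ?addr0.
  by apply: eq_big_nat => i /andP[_ ->].
by move=> i /andP[/andP[/leq_gtF -> _] _]; rewrite mul0r.
Qed.

End IndicatorSums.

Lemma nat_exists_uniq (I : finType) (P : pred I) :
  (forall i i', P i -> P i' -> i = i') -> ([exists i, P i] : nat) = (\sum_i P i)%N.
Proof.
move=> P_uniq; case: existsP => [[i0 Pi0]|noP].
  rewrite (bigD1 i0) //= Pi0 big1 // => i ne_i_i0.
  by apply/eqP; rewrite eqb0; apply: contra ne_i_i0 => Pi; rewrite (P_uniq _ _ Pi Pi0).
by rewrite big1 // => i _; apply/eqP; rewrite eqb0; apply/negP => Pi; apply: noP; exists i.
Qed.

Lemma nat_orb3 (a b c : bool) : ~~ (a && b) -> ~~ (a && c) -> ~~ (b && c) ->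
  [|| a, b | c] = a + b + c :> nat.
Proof. by case: a; case: b; case: c. Qed.

Section RemainderSequence.
Variables K D : nat.

Lemma lamPS n : lamP K D n.+1 = lam K D n. Proof. by []. Qed.

Lemma lamS n : lam K D n.+1 = if lam K D n == 0 then 0 else lamP K D n %% lam K D n.
Proof. by []. Qed.

Lemma lamS_le n : lam K D n.+1 <= lam K D n.
Proof. by rewrite lamS; case: posnP => // lam_n_gt0; rewrite ltnW ?ltn_pmod. Qed.

Lemma lamS_lt n : 0 < lam K D n -> lam K D n.+1 < lam K D n.
Proof. by move=> lam_n_gt0; rewrite lamS gtn_eqF ?ltn_pmod. Qed.

Lemma leq_lam {m n} : m <= n -> lam K D n <= lam K D m.
Proof.
move=> /subnK <-; elim: (n - m) => // d IHd.
by rewrite addSn (leq_trans (lamS_le _) IHd).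
Qed.

Lemma lam_leD n : lam K D n <= D.
Proof. exact: (leq_lam (leq0n n)). Qed.

Lemma lamS_leKD n : lam K D n.+1 <= K - D.
Proof.
apply: leq_trans (leq_lam (ltn0Sn n)) _.
by rewrite lamS; case: eqP => // _; apply: leq_mod.
Qed.

Lemma lamP_le_lam m n : m < n -> lamP K D n <= lam K D m.
Proof. by case: n => // n; rewrite ltnS lamPS; apply: leq_lam. Qed.

Lemma lam_euclid n :
  0 < lam K D n -> lamP K D n = beta K D n * lam K D n + lam K D n.+1.
Proof. by move=> lam_n_gt0; rewrite lamS gtn_eqF // /beta -divn_eq. Qed.

Lemma lam_le_subn n : lam K D n <= D - n.
Proof.
elim: n => [|n IHn]; first by rewrite subn0.
by have [lam0|/lamS_lt] := posnP (lam K D n); [rewrite lamS lam0 | lia].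
Qed.

Hypotheses (D_gt0 : 0 < D) (D_leK : D <= K).

Lemma has_lam_eq0 : has (fun i => lam K D i.+1 == 0) (iota 0 K).
Proof.
apply/hasP; exists D.-1; first by rewrite mem_iota; lia.
by rewrite prednK //; have := lam_le_subn D; rewrite subnn leqn0.
Qed.

Lemma ell_lt : ell K D < K.
Proof. by have := has_lam_eq0; rewrite has_find size_iota. Qed.

Lemma lam_gt0 i : i <= ell K D -> 0 < lam K D i.
Proof.
case: i => [//|i] le_i; have := before_find 0 le_i.
by rewrite nth_iota ?add0n ?lt0n //; have := ell_lt; lia.
Qed.

Lemma lam_eq0 i : ell K D < i -> lam K D i = 0.
Proof.
have := nth_find 0 has_lam_eq0; rewrite nth_iota ?ell_lt // add0n => /eqP lam_ell.
by move=> /leq_lam; rewrite lam_ell leqn0 => /eqP.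
Qed.

Lemma sum_beta_lam_odd i : 0 < lam K D (2 * i).-1 ->
  \sum_(1 <= s < i.+1) beta K D (2 * s).-1 * lam K D (2 * s).-1 = D - lam K D (2 * i).
Proof.
elim: i => [|i IHi]; first by rewrite big_geq // subnn.
have odd_i : (2 * i.+1).-1 = (2 * i).+1 by lia.
move=> lam_odd_gt0; rewrite odd_i in lam_odd_gt0.
rewrite big_nat_recr // odd_i IHi /=; last by apply: leq_trans lam_odd_gt0 (leq_lam _); lia.
have := lam_euclid _ lam_odd_gt0; rewrite lamPS (_ : 2 * i.+1 = (2 * i).+2); last by lia.
by have := lam_leD (2 * i); lia.
Qed.

End RemainderSequence.

Section ColumnIntervals.
Variables K D : nat.
Hypotheses (D_gt0 : 0 < D) (D_leK : D <= K).

Lemma inC_uniq i i' k : inC K D i k -> inC K D i' k -> i = i'.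
Proof.
wlog lt_ii' : i i' / i < i'.
  move=> W Ci Ci'; case: (ltngtP i i') => [lt_ii'|lt_i'i|//].
    exact: W lt_ii' Ci Ci'.
  exact/esym/(W _ _ lt_i'i Ci' Ci).
rewrite /inC /inR => /andP[_ lt_k] /andP[ge_k _].
by have := @lamP_le_lam K D (2 * i).+1 (2 * i'); lia.
Qed.

Lemma inC_cover k : k < K - D -> exists2 m, m <= uphalf (ell K D) & inC K D m k.
Proof.
move=> lt_k; have lt_k_top : exists m, k < K - D - lam K D (2 * m).+1.
  by exists (uphalf (ell K D)); rewrite lam_eq0 //; lia.
case: (ex_minnP lt_k_top) => m lt_k_m min_m; exists m.
  by apply: min_m; rewrite lam_eq0 //; lia.
rewrite /inC /inR lt_k_m andbT.
case: m lt_k_m min_m => [|m] _ min_m; first by rewrite muln0 subnn.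
rewrite (_ : 2 * m.+1 = (2 * m).+2) ?lamPS; last by lia.
by rewrite leqNgt; apply/negP => /min_m; lia.
Qed.

Lemma exists_inC_ge i k : 0 < i -> k < K - D ->
  [exists m : 'I_(uphalf (ell K D)).+1, (i <= m) && inC K D m k] =
  (K - D - lam K D (2 * i).-1 <= k).
Proof.
move=> i_gt0 lt_k; apply/existsP/idP => [[m /andP[le_im]]|ge_k].
  rewrite /inC /inR => /andP[ge_k _].
  by have := @lamP_le_lam K D (2 * i).-1 (2 * m); lia.
have [m le_m Cm] := inC_cover _ lt_k; exists (Ordinal (le_m : m < _.+1)).
rewrite Cm andbT /= leqNgt; apply/negP => lt_mi.
move: Cm; rewrite /inC /inR => /andP[_].
by have := @leq_lam K D (2 * m).+1 (2 * i).-1; lia.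
Qed.

End ColumnIntervals.

Definition even_block K D i j k :=
  [&& 2 * i <= ell K D, inR (K - lam K D (2 * i)) K j, inC K D i k &
      (k - (K - D - lamP K D (2 * i))) %% lam K D (2 * i) == j - (K - lam K D (2 * i))].

Definition odd_block K D i j k :=
  [&& 1 <= (2 * i).+1 <= ell K D,
      inR (K - lam K D (2 * i)) (K - lam K D (2 * i).+2) j,
      inR (K - D - lam K D (2 * i).+1) (K - D) k &
      (j - (K - lam K D (2 * i))) %% lam K D (2 * i).+1 == k - (K - D - lam K D (2 * i).+1)].

Lemma airLE K D j k : airL K D j k =
  [|| (j < K - D) && (k < K - D) && (j == k),
      [exists i : 'I_(ell K D).+1, even_block K D i j k] |
      [exists i : 'I_(ell K D).+1, odd_block K D i j k]].
Proof. by []. Qed.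

Section AirColumn.
Variables K D k : nat.
Hypotheses (D_gt0 : 0 < D) (D_leK : D <= K) (lt_k : k < K - D).

Lemma even_block_uniq i i' j : even_block K D i j k -> even_block K D i' j k -> i = i'.
Proof. by move=> /and4P[_ _ Ci _] /and4P[_ _ Ci' _]; apply: inC_uniq Ci Ci'. Qed.

Lemma odd_block_uniq i i' j : odd_block K D i j k -> odd_block K D i' j k -> i = i'.
Proof.
wlog lt_ii' : i i' / i < i'.
  move=> W Oi Oi'; case: (ltngtP i i') => [lt_ii'|lt_i'i|//].
    exact: W lt_ii' Oi Oi'.
  exact/esym/(W _ _ lt_i'i Oi' Oi).
move=> /and4P[_ /andP[_ lt_j] _ _] /and4P[_ /andP[ge_j _] _ _].
have := @leq_lam K D (2 * i).+2 (2 * i'); have := lam_leD K D (2 * i').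
have := lam_leD K D (2 * i).+2; lia.
Qed.

Lemma airL_nat j : (airL K D j k : nat) = (j == k) +
  \sum_(i < (ell K D).+1) even_block K D i j k + \sum_(i < (ell K D).+1) odd_block K D i j k.
Proof.
have diag_j : (j < K - D) && (k < K - D) && (j == k) = (j == k).
  by case: eqP => [->|]; rewrite ?lt_k ?andbF.
have row_even i : even_block K D i j k -> K - D <= j.
  by case/and4P => _ /andP[ge_j _] _ _; have := lam_leD K D (2 * i); lia.
have row_odd i : odd_block K D i j k -> K - D <= j.
  by case/and4P => _ /andP[ge_j _] _ _; have := lam_leD K D (2 * i); lia.
have even_odd i i' : even_block K D i j k -> odd_block K D i' j k -> False.
  case/and4P => _ /andP[ge_j _] /andP[_ lt_k'] _ /and4P[_ /andP[_ lt_j] /andP[ge_k _] _].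
  have [le_ii'|lt_i'i] := leqP i i'.
    by have := @leq_lam K D (2 * i).+1 (2 * i').+1; have := lamS_leKD K D (2 * i); lia.
  have := @leq_lam K D (2 * i').+2 (2 * i); have := lam_leD K D (2 * i).
  have := lam_leD K D (2 * i').+2; lia.
rewrite airLE diag_j nat_orb3.
- congr (_ + _ + _); apply: nat_exists_uniq => i i' Bi Bi'; apply: val_inj.
    exact: even_block_uniq Bi Bi'.
  exact: odd_block_uniq Bi Bi'.
- by apply/andP => -[/eqP eq_jk /existsP[i /row_even]]; lia.
- by apply/andP => -[/eqP eq_jk /existsP[i /row_odd]]; lia.
by apply/andP => -[/existsP[i Ei] /existsP[i' Oi']]; apply: even_odd Ei Oi'.
Qed.

Variables (R : pzSemiRingType) (x : nat -> R).
Local Open Scope ring_scope.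

Lemma sum_even_block i : \sum_(j < K) (even_block K D i j k : nat)%:R * x j =
  ((2 * i <= ell K D)%N && inC K D i k : nat)%:R *
  x (K - lam K D (2 * i) + (k - (K - D - lamP K D (2 * i))) %% lam K D (2 * i))%N.
Proof.
have [/andP[le_i Ci]|no_block] := boolP ((2 * i <= ell K D)%N && inC K D i k); last first.
  rewrite mul0r sum_indicator0 // => j; apply/negbTE/and4P => -[le_i _ Ci _].
  by rewrite le_i Ci in no_block.
have lam_i_gt0 := lam_gt0 K D D_gt0 D_leK _ le_i.
set r := (_ %% _)%N; have lt_r : (r < lam K D (2 * i))%N by apply: ltn_pmod.
have := lam_leD K D (2 * i) => le_lam.
rewrite mul1r; apply: sum_indicator1 => [|j]; first lia.
by rewrite /even_block le_i Ci /inR -/r; have := ltn_ord j; case: eqP; case: eqP; lia.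
Qed.

(* Here and below the lower bound is [1%N] rather than the ring-scope [1] of the
   main statement (the two are convertible), so that [big_add1] applies. *)
Lemma sum_odd_block i : \sum_(j < K) (odd_block K D i j k : nat)%:R * x j =
  (((2 * i).+1 <= ell K D)%N && (K - D - lam K D (2 * i).+1 <= k)%N : nat)%:R *
  \sum_(1%N <= s < (beta K D (2 * i).+1).+1)
     x (k + \sum_(1 <= t < i.+1) beta K D (2 * t).-1 * lam K D (2 * t).-1
          + s * lam K D (2 * i).+1)%N.
Proof.
have [/andP[le_i ge_k]|no_block] :=
  boolP (((2 * i).+1 <= ell K D)%N && (K - D - lam K D (2 * i).+1 <= k)%N); last first.
  rewrite mul0r sum_indicator0 // => j.
  apply/negbTE/and4P => -[/andP[_ le_i] _ /andP[ge_k _] _].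
  by rewrite le_i ge_k in no_block.
have lam_i_gt0 := lam_gt0 K D D_gt0 D_leK _ le_i.
have := @lam_euclid K D _ lam_i_gt0; rewrite lamPS => euclid.
have sum_S : (\sum_(1 <= t < i.+1) beta K D (2 * t).-1 * lam K D (2 * t).-1 =
    D - lam K D (2 * i))%N.
  by apply: sum_beta_lam_odd => //; apply: leq_trans lam_i_gt0 _; apply: leq_lam; lia.
have := lam_leD K D (2 * i); have := lamS_leKD K D (2 * i) => le_lam1 le_lam0.
have lam_split : (K - lam K D (2 * i).+2 =
    K - lam K D (2 * i) + beta K D (2 * i).+1 * lam K D (2 * i).+1)%N by lia.
rewrite sum_S mul1r.
under [LHS]eq_bigr => j _ do rewrite /odd_block le_i /inR ge_k lt_k lam_split /= -andbA.
rewrite sum_indicator_progression; [|lia|lia].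
by rewrite big_add1; apply: eq_big_nat => s _; congr (x _); lia.
Qed.

Lemma sum_airL_blocks : \sum_(j < K) (airL K D j k : nat)%:R * x j =
  x k + \sum_(i < (ell K D).+1) \sum_(j < K) (even_block K D i j k : nat)%:R * x j
      + \sum_(i < (ell K D).+1) \sum_(j < K) (odd_block K D i j k : nat)%:R * x j.
Proof.
under eq_bigr => j _ do rewrite airL_nat !natrD !mulrDl !natr_sum !mulr_suml.
rewrite !big_split /= [in RHS]exchange_big [X in _ + X = _]exchange_big /=.
by rewrite (@sum_indicator1 _ _ _ (fun j : 'I_K => j == k :> nat) k) //; lia.
Qed.

Lemma sum_even_blocks :
  \sum_(i < (ell K D).+1) \sum_(j < K) (even_block K D i j k : nat)%:R * x j =
  \sum_(0 <= i < (ell K D)./2.+1) (inC K D i k : nat)%:R *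
    x (K - lam K D (2 * i) + (k - (K - D - lamP K D (2 * i))) %% lam K D (2 * i))%N.
Proof.
rewrite -(@sum_indicator_prefix R _ _ _ _ (_ : (ell K D)./2.+1 <= (ell K D).+1)%N);
  last by lia.
apply: eq_bigr => i _; rewrite sum_even_block.
by congr ((_ : nat)%:R * _); congr (_ && _); lia.
Qed.

Lemma sum_odd_blocks :
  \sum_(i < (ell K D).+1) \sum_(j < K) (odd_block K D i j k : nat)%:R * x j =
  \sum_(1%N <= i < (uphalf (ell K D)).+1)
    ([exists m : 'I_(uphalf (ell K D)).+1, (i <= m)%N && inC K D m k] : nat)%:R *
    \sum_(1%N <= j < (beta K D (2 * i).-1).+1)
      x (k + \sum_(1 <= s < i) (beta K D (2 * s).-1 * lam K D (2 * s).-1)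
           + j * lam K D (2 * i).-1)%N.
Proof.
rewrite big_add1 -(@sum_indicator_prefix R _ _ _ _ (_ : uphalf (ell K D) <= (ell K D).+1)%N);
  last by lia.
apply: eq_bigr => i _; rewrite sum_odd_block exists_inC_ge //.
rewrite (_ : (2 * i.+1).-1 = (2 * i).+1)%N; last by lia.
by congr ((_ : nat)%:R * _); congr (_ && _); lia.
Qed.

End AirColumn.

Local Open Scope ring_scope.

Theorem theorem1 (F : finFieldType) (K D : nat) (x : nat -> F) :
  (1 <= D)%N -> (D <= K - 1)%N ->
  forall k : 'I_(K - D),
    \sum_(j < K) airMx F K D j k * x j =
      x k
      + \sum_(0 <= i < (ell K D)./2.+1)
          (inC K D i k : nat)%:R *
          x ((K - lam K D (2 * i)) +
             ((k - (K - D - lamP K D (2 * i))) %% lam K D (2 * i)))%N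
      + \sum_(1 <= i < (uphalf (ell K D)).+1)
          ([exists m : 'I_(uphalf (ell K D)).+1, (i <= m)%N && inC K D m k] : nat)%:R *
          \sum_(1 <= j < (beta K D (2 * i).-1).+1)
            x (k + \sum_(1 <= s < i) (beta K D (2 * s).-1 * lam K D (2 * s).-1)
                 + j * lam K D (2 * i).-1)%N.
Proof.
move=> D_gt0 D_le_K1 k; have D_leK : (D <= K)%N by lia.
have lt_k := ltn_ord k.
under eq_bigr do rewrite mxE.
by rewrite sum_airL_blocks // sum_even_blocks // sum_odd_blocks.
Qed.
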